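(* Fix $K\in\mathbb{N}$, and let $O=\{A_1,\dots,A_n\}\in\Omega_{n,n+K}$. Then: (1) For every $i$, $|A_i|\leq K+1$. (2) $|\{i\in[n]: |A_i|\geq 2\}|\leq K$. (3) Fix $\mu\vdash 4K$ and let $n\geq 3K$. For every standard tableau $T$ of shape $\mu^{(n-3K)}$, the monomials $m_i:=\mathrm{Sub}^T_{(x,y)}(x_{A_i})$ (so that $\mathrm{Sub}^T_{(x,y)}(P_O)=P_n(m_1,\dots,m_n)$) satisfy: (i) $|m_i|\leq K+1$ for every $i$; (ii) $|\{i\in[n]:|m_i|\geq 2\}|\leq K$; (iii) $|\{i\in[n]: m_i\neq y_1\}|\leq 16K^2$.
   Context: $\Omega_{n,m}$ is the set of ordered partitions $O=\{A_1,\dots,A_n\}$ of $[m]=\{1,\dots,m\}$ into $n$ nonempty ordered lists $A_i$ whose underlying sets are pairwise disjoint with union $[m]$; $|A_i|$ is the length of $A_i$. For $A=[\![ab\cdots c]\!]$, $x_A=x_ax_b\cdots x_c$; $P_n(z_1,\dots,z_n)=\sum_{\sigma\in S_n}z_{\sigma(1)}\cdots z_{\sigma(n)}$ and $P_O=P_n(x_{A_1},\dots,x_{A_n})$. For $\nu=(\nu_1,\dots,\nu_r)$, $\nu^{(s)}=(\nu_1+s,\nu_2,\dots,\nu_r)$. A standard tableau $T$ of shape $\nu\vdash m$ is the Young diagram of $\nu$ filled with $1,\dots,m$ increasing along rows and columns; $\mathrm{Sub}^T_{(x,y)}$ is the algebra homomorphism $x_j\mapsto y_{i_j}$ into the free algebra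 on $Y=\{y_1,y_2,\dots\}$, $i_j$ being the row of $T$ containing $j$. $|m|$ denotes the length of a monomial $m$. *)

From mathcomp Require Import all_boot.
Set Implicit Arguments. Unset Strict Implicit. Unset Printing Implicit Defensive.

(* The
   condition that the underlying sets are pairwise disjoint (and the lists are
   orderings of their underlying sets) with union [m] is expressed by saying
   that the concatenation of the lists is a permutation of 1,...,m. *)
Definition ordered_partition (n m : nat) (O : seq (seq nat)) : Prop :=
  [/\ size O = n, all (fun A => A != [::]) O & perm_eq (flatten O) (iota 1 m)].

Definition is_partition_of (nu : seq nat) (m : nat) : Prop :=
  [/\ sorted geq nu, all (fun p => 0 < p) nu & sumn nu = m].

(* nu^(s) = (nu_1 + s, nu_2, ..., nu_r); for the empty partition we take (s). *)
Definition shift_first (s : nat) (nu : seq nat) : seq nat :=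
  match nu with
  | [::] => [:: s]
  | a :: t => (a + s) :: t
  end.

Definition standard_tableau (nu : seq nat) (T : seq (seq nat)) : Prop :=
  [/\ map size T = nu,
      perm_eq (flatten T) (iota 1 (sumn nu)),
      all (sorted ltn) T &
      forall i j, j < size (nth [::] T i.+1) ->
        nth 0 (nth [::] T i) j < nth 0 (nth [::] T i.+1) j].

Definition row_of (T : seq (seq nat)) (j : nat) : nat :=
  (find (fun r => j \in r) T).+1.

(* Monomials in the free algebra on Y = {y_1, y_2, ...} are words, represented
   as sequences of indices: the word y_{a} y_{b} ... y_{c} is [:: a; b; ...; c].  Sub^T_{(x,y)} applied to x_A = x_a x_b ... x_c
   gives y_{i_a} y_{i_b} ... y_{i_c}. *)
Definition SubT (T : seq (seq nat)) (A : seq nat) : seq nat := map (row_of T) A.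

Definition y1 : seq nat := [:: 1].

From mathcomp Require Import all_boot.
From mathcomp Require Import zify.

(* n nonempty parts of total size n + K carry an excess of K over their
   number, so no part exceeds size K + 1 and at most K parts have size >= 2;
   substitution preserves lengths.  A substituted part differs from y_1 only
   if it is long or is a singleton whose entry lies outside the first row of T,
   and the first row of T contains all entries but the 4K lying in rows
   2, 3, ..., whence at most K + 4K <= 16K^2 such parts. *)

Lemma size_add_count_long_le_sumn {s : seq (seq nat)} :
  all (fun A => A != [::]) s ->
  size s + count (fun A => 2 <= size A) s <= sumn (map size s).
Proof.
elim: s => [|A t IH] //= /andP [nzA /IH].
by case: A nzA => [|a [|b u]] //= _; lia.
Qed.

Lemma size_nth_add_le_sumn {s : seq (seq nat)} i :
  all (fun A => A != [::]) s -> i < size s ->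
  size (nth [::] s i) + (size s).-1 <= sumn (map size s).
Proof.
elim: s i => [|A t IH] //= [|i] /andP [nzA nzt] /= lt_i.
- have := size_add_count_long_le_sumn nzt.
  by case: A nzA => [|a u] //= _; lia.
- have := IH i nzt lt_i.
  by case: A nzA => [|a u] //= _; case: (size t) lt_i => //= *; lia.
Qed.

Lemma ordered_partition_sumn {n m O} :
  ordered_partition n m O -> sumn (map size O) = m.
Proof. by case=> _ _ permO; rewrite -size_flatten (perm_size permO) size_iota. Qed.

Lemma ordered_partition_size_nth {K n O} :
  ordered_partition n (n + K) O -> forall i, i < n -> size (nth [::] O i) <= K.+1.
Proof.
move=> partO i lt_in; have [sizeO nzO _] := partO.
have := size_nth_add_le_sumn i nzO; rewrite sizeO (ordered_partition_sumn partO).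
by move/(_ lt_in); lia.
Qed.

Lemma ordered_partition_count_long {K n O} :
  ordered_partition n (n + K) O -> count (fun A => 2 <= size A) O <= K.
Proof.
move=> partO; have [sizeO nzO _] := partO.
have := size_add_count_long_le_sumn nzO.
by rewrite sizeO (ordered_partition_sumn partO); lia.
Qed.

Lemma size_SubT T A : size (SubT T A) = size A.
Proof. exact: size_map. Qed.

Lemma row_of_neq1 T a : row_of T a != 1 -> a \notin head [::] T.
Proof. by case: T => [|R T] //=; rewrite /row_of /=; case: (a \in R). Qed.

Lemma count_SubT_neq_y1 T {s : seq (seq nat)} : all (fun A => A != [::]) s ->
  count (fun m => m != y1) (map (SubT T) s) <=
  count (fun A => 2 <= size A) s + count (predC (mem (head [::] T))) (flatten s).
Proof.
elim: s => [|A s IH] //= /andP [nzA /IH]; rewrite count_cat.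
case: A nzA => [|a [|b u]] //= _; last by lia.
have notin_row1 : [:: row_of T a] != y1 -> a \notin head [::] T.
  by rewrite eqseq_cons andbT => /row_of_neq1.
by case: eqP notin_row1 => /= [_ _ | _ ->] //; lia.
Qed.

Lemma standard_tableau_count_notin_first_row {nu T} : standard_tableau nu T ->
  count (predC (mem (head [::] T))) (iota 1 (sumn nu)) <= sumn (behead nu).
Proof.
case=> shapeT permT _ _; rewrite -(permP permT) -shapeT.
case: T {shapeT permT} => [|R T] //=; rewrite count_cat.
have -> : count (predC (mem R)) R = 0.
  by apply/eqP; rewrite eqn0Ngt -has_count; apply/hasPn => x /= ->.
by rewrite -size_flatten count_size.
Qed.

Lemma sumn_shift_first k nu : sumn (shift_first k nu) = k + sumn nu.
Proof. by case: nu => [|a nu] /=; lia. Qed.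

Lemma behead_shift_first k nu : behead (shift_first k nu) = behead nu.
Proof. by case: nu. Qed.

Lemma sumn_behead_le nu : sumn (behead nu) <= sumn nu.
Proof. by case: nu => [|a nu] //=; exact: leq_addl. Qed.

Theorem proposition4p28 (K n : nat) (O : seq (seq nat)) :
  ordered_partition n (n + K) O ->
  [/\ (forall i, i < n -> size (nth [::] O i) <= K.+1),
      count (fun A => 2 <= size A) O <= K &
      forall mu : seq nat, is_partition_of mu (4 * K) -> 3 * K <= n ->
      forall T : seq (seq nat), standard_tableau (shift_first (n - 3 * K) mu) T ->
        let ms := map (SubT T) O in
        [/\ (forall i, i < n -> size (nth [::] ms i) <= K.+1),
            count (fun m => 2 <= size m) ms <= K &
            count (fun m => m != y1) ms <= 16 * K ^ 2]].
Proof.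
move=> partO; have [sizeO nzO permO] := partO.
have size_le := ordered_partition_size_nth partO.
have long_le := ordered_partition_count_long partO.
split=> // mu [_ _ sum_mu] le_3K_n T tabT ms.
split=> [i lt_in||].
- by rewrite (nth_map [::]) ?sizeO // size_SubT; exact: size_le.
- by rewrite count_map (eq_count (a2 := fun A => 2 <= size A)) // => A /=; rewrite size_SubT.
have row1_bound : count (predC (mem (head [::] T))) (flatten O) <= 4 * K.
  have := standard_tableau_count_notin_first_row tabT.
  rewrite sumn_shift_first behead_shift_first sum_mu (_ : _ + 4 * K = n + K); last by lia.
  by rewrite -(permP permO) => /leq_trans; apply; rewrite -sum_mu sumn_behead_le.
have := count_SubT_neq_y1 T nzO; rewrite -/ms.
have : 5 * K <= 16 * K ^ 2 by nia.
lia.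
Qed.
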